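(* Let $k\ge 4$, $n=2k-1$, $\lambda\in\overline{\mathcal{U}}_{T_n}$, and let $Y=\mathrm{KN}(S_\lambda)$. Write the elements of $S_\lambda$ increasingly as $0=s_0<s_1<\cdots$ and let $z$ be the index with $s_z=n-2$. Then: (1) the cell in row $z+1$ and column $z+1$ does not belong to $Y$; (2) column $z+1$ of $Y$ contains exactly $z$ cells; (3) the main diagonal of $Y$ contains exactly $z$ cells.
   Context: A partition of $N$ into distinct parts is a sequence $\lambda=(\lambda_1<\dots<\lambda_t)$ of positive integers with sum $N$ and $t\ge 2$, identified with its set of parts. Missing parts: $\mathcal{M}_\lambda=\{1,\dots,\lambda_t\}\setminus\lambda$. $\lambda$ is refinable if two distinct missing parts sum to a part of $\lambda$, unrefinable otherwise; $\mathcal{U}_N$ is the set of unrefinable partitions of $N$. An element of $\mathcal{U}_N$ is maximal if its largest part is the maximum of the largest parts of elements of $\mathcal{U}_N$; $\widetilde{\mathcal{U}}_N$ is the set of these and $\overline{\mathcal{U}}_N=\{\lambda\in\widetilde{\mathcal{U}}_N:\#\mathcal{M}_\lambda=\lfloor\lambda_t/2\rfloor\}$. $T_n=n(n+1)/2$. For $\lambda\in\overline{\mathcal{U}}_{T_n}$ (with $n=2k-1$, $k\ge 4$) one knows $\lambda_t=2n-4$, $t=n-2$ and $n-2\notin\lambda$. $S_\lambda=\mathbb{N}_0\setminus\lambda$. The Keith–Nath transformation sends a set $S\subseteq\mathbb{N}_0$ with $0\in S$ and finite complement to the Young diagram $\mathrm{KN}(S)$ whose boundary is the lattice path that, starting at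 the origin, takes for $j=0,1,\dots,\max(\mathbb{N}_0\setminus S)$ an east step if $j\in S$ and a north step otherwise. Diagrams are in English convention (rows numbered from the top, columns from the left); the main diagonal consists of the cells in row $i$, column $i$. *)

From mathcomp Require Import all_boot.
Set Implicit Arguments. Unset Strict Implicit. Unset Printing Implicit Defensive.

Definition T (n : nat) : nat := (n * n.+1) %/ 2.

(* A partition into distinct parts is represented by the strictly increasing
   list of its parts [:: l_1; ...; l_t] (identified with its set of parts). *)
Definition is_dpart (N : nat) (lam : seq nat) : bool :=
  [&& sorted ltn lam, all (fun x => 0 < x) lam, sumn lam == N & 2 <= size lam].

Definition largest (lam : seq nat) : nat := last 0 lam.

Definition missing (lam : seq nat) : seq nat :=
  [seq m <- iota 1 (largest lam) | m \notin lam].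

Definition refinable (lam : seq nat) : bool :=
  has (fun a => has (fun b => (a != b) && (a + b \in lam)) (missing lam))
      (missing lam).

Definition unrefinable (N : nat) (lam : seq nat) : bool :=
  is_dpart N lam && ~~ refinable lam.

Definition maximalU (N : nat) (lam : seq nat) : Prop :=
  unrefinable N lam /\ forall mu, unrefinable N mu -> largest mu <= largest lam.

Definition overlineU (N : nat) (lam : seq nat) : Prop :=
  maximalU N lam /\ size (missing lam) = (largest lam)./2.

(* S_lam = N_0 \ lam, enumerated increasingly: S_enum lam i = s_i.
   (The filtered list contains at least i+1 elements since every
   j > max lam lies in S_lam.) *)
Definition S_enum (lam : seq nat) (i : nat) : nat :=
  nth 0 [seq j <- iota 0 ((\max_(g <- lam) g) + i + 1) | j \notin lam] i.

(* Keith--Nath transformation of the set S = N_0 \ G (G finite, 0 \notin G),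
   given by the finite complement G.  Steps j = 0..max G: east (true) if
   j \in S, north (false) otherwise. *)
Definition KN_steps (G : seq nat) : seq bool :=
  [seq j \notin G | j <- iota 0 (\max_(g <- G) g).+1].

(* number of north steps = number of rows of the diagram *)
Definition KN_height (G : seq nat) : nat := count negb (KN_steps G).

(* English convention: cell in row i (from the top, 1-indexed) and column c
   (from the left, 1-indexed) is the unit square [c-1,c] x [h-i, h-i+1]
   (h = height); it lies in the diagram iff the north step of the path
   going from height h-i to h-i+1 has x-coordinate (number of preceding
   east steps) at least c. *)
Definition KN_cell (G : seq nat) (i c : nat) : bool :=
  let st := KN_steps G in
  let h := KN_height G in
  [&& 1 <= i <= h, 1 <= c &
   has (fun p => [&& ~~ nth true st p,
                     count negb (take p st) == h - i &
                     c <= count id (take p st)])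
       (iota 0 (size st))].

Definition KN_col_count (G : seq nat) (c : nat) : nat :=
  count (fun i => KN_cell G i c) (iota 1 (KN_height G)).

Definition KN_diag_count (G : seq nat) : nat :=
  count (fun i => KN_cell G i i) (iota 1 (KN_height G)).

From mathcomp Require Import all_boot.
From mathcomp Require Import zify.

(* Let L be the largest part of lam.  Unrefinability and #M_lam = floor(L/2) force lam
   to consist of L and, for each a <= (L-1)/2, exactly one of a and L - a; in particular
   L/2 is not a part when L is even.  Comparing the sum of such a partition with T_n,
   and bounding L from below by the unrefinable partition {1,...,2k-4} + {2k, 4k-6} of
   T_n, gives L = 4k-6, so r = 2k-3 is both the number of parts and a non-part.
   After j steps the Keith--Nath path is at (gaps below j, parts below j); at j = r this
   is (z, r - z) and the next step is east.  So the z largest parts give the rows of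
   length > z and all other rows have length <= z: z is the Durfee size of the
   diagram, which yields the three claims. *)

Set Implicit Arguments.
Unset Strict Implicit.
Unset Printing Implicit Defensive.

Lemma count_mem_sym (T : eqType) (s t : seq T) :
  uniq s -> uniq t -> count (fun x => x \in s) t = count (fun x => x \in t) s.
Proof.
move=> s_uniq t_uniq; rewrite -!size_filter; apply/perm_size/uniq_perm.
- exact: filter_uniq.
- exact: filter_uniq.
by move=> x; rewrite !mem_filter andbC.
Qed.

Lemma count_iota0_mono (P : pred nat) :
  {homo (fun m => count P (iota 0 m)) : m n / m <= n}.
Proof. by move=> m n mn /=; rewrite -(subnKC mn) iotaD count_cat leq_addr. Qed.

Lemma count_iota0S (P : pred nat) m :
  count P (iota 0 m.+1) = count P (iota 0 m) + P m.
Proof. by rewrite -addn1 iotaD count_cat /= addn0. Qed.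

Lemma count_iota1_le z r : z <= r -> count (fun i => 0 < i <= z) (iota 1 r) = z.
Proof.
move=> zr; rewrite -(subnKC zr) iotaD count_cat.
rewrite (eq_in_count (a2 := predT)) => [|i]; last by rewrite mem_iota /=; lia.
rewrite (eq_in_count (a2 := pred0) (s := iota (1 + z) _)) => [|i];
  last by rewrite mem_iota /=; lia.
by rewrite count_predT count_pred0 size_iota addn0.
Qed.

Lemma sorted_ltn_le_last s x : sorted ltn s -> x \in s -> x <= last 0 s.
Proof.
move=> s_sorted xs; rewrite -(nth_index 0 xs) -(nth_last 0).
have idx_lt : index x s < size s by rewrite index_mem.
by apply: (sorted_leq_nth leq_trans leqnn 0 (sub_sorted ltnW s_sorted));
  rewrite ?inE; lia.
Qed.

Lemma rank_nth s j : sorted ltn s -> j < size s -> count (fun x => x < nth 0 s j) s = j.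
Proof.
elim: s j => // x s IH j /= x_path.
have x_min := order_path_min ltn_trans x_path.
case: j => [|j] /= j_lt.
  rewrite ltnn add0n; apply/eqP; rewrite eqn0Ngt -has_count; apply/hasPn => y y_s.
  by rewrite -leqNgt ltnW //; exact: (allP x_min).
by rewrite (allP x_min) ?mem_nth // IH // (path_sorted x_path).
Qed.

Definition parts_below (lam : seq nat) (a : nat) : nat :=
  count (fun x => x \in lam) (iota 0 a).

Definition gaps_below (lam : seq nat) (a : nat) : nat :=
  count (fun x => x \notin lam) (iota 0 a).

Lemma gaps_below_add_parts lam a : gaps_below lam a + parts_below lam a = a.
Proof. by rewrite addnC -[RHS](size_iota 0 a) -(count_predC (mem lam)). Qed.

Lemma gaps_below_le lam a : gaps_below lam a <= a.
Proof. by rewrite -[leqRHS](gaps_below_add_parts lam) leq_addr. Qed.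

Lemma parts_below_mono lam : {homo parts_below lam : a b / a <= b}.
Proof. exact: count_iota0_mono. Qed.

Lemma gaps_below_mono lam : {homo gaps_below lam : a b / a <= b}.
Proof. exact: count_iota0_mono. Qed.

Lemma parts_belowS lam a : parts_below lam a.+1 = parts_below lam a + (a \in lam).
Proof. exact: count_iota0S. Qed.

Lemma gaps_belowS lam a : gaps_below lam a.+1 = gaps_below lam a + (a \notin lam).
Proof. exact: count_iota0S. Qed.

Lemma parts_below_nth lam j : sorted ltn lam -> j < size lam ->
  parts_below lam (nth 0 lam j) = j.
Proof.
move=> lam_sorted j_lt; have lam_uniq := sorted_uniq ltn_trans ltnn lam_sorted.
rewrite /parts_below count_mem_sym ?iota_uniq //.
by rewrite -[RHS](rank_nth lam_sorted j_lt); apply: eq_count => x; rewrite mem_iota.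
Qed.

Lemma KN_height_size lam : uniq lam -> KN_height lam = size lam.
Proof.
move=> lam_uniq; rewrite /KN_height /KN_steps count_map.
rewrite (eq_count (a2 := fun x => x \in lam)) => [|x]; last by rewrite /= negbK.
rewrite count_mem_sym ?iota_uniq // -[RHS]count_predT.
by apply: eq_in_count => x x_lam; rewrite mem_iota ltnS (leq_bigmax_seq _ x_lam).
Qed.

Section KNSteps.
Variable G : seq nat.
Local Notation M := (\max_(g <- G) g).

Lemma size_KN_steps : size (KN_steps G) = M.+1.
Proof. by rewrite size_map size_iota. Qed.

Lemma nth_KN_steps p : p <= M -> nth true (KN_steps G) p = (p \notin G).
Proof. by move=> pM; rewrite (nth_map 0) ?size_iota // nth_iota. Qed.

Lemma take_KN_steps p : p <= M.+1 ->
  take p (KN_steps G) = [seq j \notin G | j <- iota 0 p].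
Proof. by move=> pM; rewrite -map_take take_iota (minn_idPl pM). Qed.

Lemma count_north_take p : p <= M.+1 ->
  count negb (take p (KN_steps G)) = parts_below G p.
Proof.
by move=> pM; rewrite take_KN_steps // count_map; apply: eq_count => x /=; rewrite negbK.
Qed.

Lemma count_east_take p : p <= M.+1 -> count id (take p (KN_steps G)) = gaps_below G p.
Proof. by move=> pM; rewrite take_KN_steps // count_map. Qed.

End KNSteps.

Lemma KN_cellE lam i c : sorted ltn lam ->
  KN_cell lam i c =
  [&& 0 < i <= size lam, 0 < c & c <= gaps_below lam (nth 0 lam (size lam - i))].
Proof.
move=> lam_sorted; have lam_uniq := sorted_uniq ltn_trans ltnn lam_sorted.
rewrite /KN_cell KN_height_size // size_KN_steps.
case: (boolP (0 < i <= size lam)) => i_range //; case: (boolP (0 < c)) => _ //.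
rewrite !andTb; set M := \max_(g <- lam) g.
have le_M x : x \in lam -> x <= M by move=> x_lam; rewrite (leq_bigmax_seq _ x_lam).
rewrite (eq_in_has (a2 := fun p => [&& p \in lam,
    parts_below lam p == size lam - i & c <= gaps_below lam p])); last first.
  move=> p; rewrite mem_iota => p_lt.
  by rewrite nth_KN_steps ?count_north_take ?count_east_take ?negbK //; lia.
set j := size lam - i; have j_lt : j < size lam by lia.
apply/hasP/idP => [[p _ /and3P[p_lam /eqP rank_p c_le]] | c_le].
  by rewrite -rank_p -(nth_index 0 p_lam) parts_below_nth ?index_mem // nth_index.
have a_lam : nth 0 lam j \in lam by exact: mem_nth.
exists (nth 0 lam j); first by rewrite mem_iota ltnS le_M.
by rewrite a_lam parts_below_nth // eqxx.
Qed.

Lemma S_enum_gaps_below lam z r : 0 < r -> S_enum lam z = r -> gaps_below lam r = z.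
Proof.
rewrite /S_enum; set B := _ + z + 1; set s := filter _ _ => r_pos s_z.
have z_lt : z < size s.
  by rewrite ltnNge; apply: contraTN r_pos => /(nth_default 0); rewrite s_z => ->.
have r_lt : r < B by move: (mem_nth 0 z_lt); rewrite s_z mem_filter mem_iota => /andP[].
have s_sorted : sorted ltn s := sorted_filter ltn_trans _ (iota_ltn_sorted 0 B).
rewrite -[RHS](rank_nth s_sorted z_lt) s_z count_filter /gaps_below.
rewrite -(subnKC (ltnW r_lt)) iotaD count_cat.
rewrite (eq_in_count (a2 := pred0) (s := iota (0 + r) _)) => [|x];
  last by rewrite mem_iota /=; lia.
rewrite count_pred0 addn0; apply: eq_in_count => x.
by rewrite mem_iota add0n => /andP[_ x_lt] /=; rewrite x_lt.
Qed.

Section DurfeeSquare.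
Variables (lam : seq nat) (r : nat).
Hypotheses (lam_sorted : sorted ltn lam) (r_notin_lam : r \notin lam).
Hypothesis size_lam : size lam = r.
Local Notation z := (gaps_below lam r).

Lemma gaps_below_nth_gt i : 0 < i <= r ->
  (z < gaps_below lam (nth 0 lam (r - i))) = (i <= z).
Proof.
move=> i_range; have j_lt : r - i < size lam by rewrite size_lam; lia.
set a := nth 0 lam (r - i); have a_lam : a \in lam by exact: mem_nth.
have parts_a : parts_below lam a = r - i := parts_below_nth lam_sorted j_lt.
have [gaps_a gaps_r] := (gaps_below_add_parts lam a, gaps_below_add_parts lam r).
case: (ltngtP a r) => [a_lt_r | r_lt_a | a_eq_r].
- have := parts_below_mono lam a_lt_r; rewrite parts_belowS a_lam.
  have := gaps_below_mono lam (ltnW a_lt_r); lia.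
- have := parts_below_mono lam r_lt_a; rewrite parts_belowS (negbTE r_notin_lam).
  have := gaps_below_mono lam r_lt_a; rewrite gaps_belowS r_notin_lam; lia.
by move: a_lam; rewrite a_eq_r (negbTE r_notin_lam).
Qed.

Lemma KN_cell_durfee_col i : KN_cell lam i z.+1 = (0 < i <= z).
Proof.
have := gaps_below_le lam r; rewrite KN_cellE // size_lam.
case: (boolP (0 < i <= r)) => i_range /=; last by lia.
by have := gaps_below_nth_gt i_range; lia.
Qed.

Lemma KN_cell_durfee_diag i : KN_cell lam i i = (0 < i <= z).
Proof.
have := gaps_below_le lam r; rewrite KN_cellE // size_lam.
case: (boolP (0 < i <= r)) => i_range /=; last by lia.
by have := gaps_below_nth_gt i_range; lia.
Qed.

End DurfeeSquare.

Lemma largest_mem lam : lam != [::] -> largest lam \in lam.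
Proof. by case: lam => // x s _; exact: mem_last. Qed.

Lemma size_missing lam : sorted ltn lam -> all (fun x => 0 < x) lam ->
  size (missing lam) + size lam = largest lam.
Proof.
move=> lam_sorted lam_pos; have lam_uniq := sorted_uniq ltn_trans ltnn lam_sorted.
rewrite /missing size_filter -[RHS](size_iota 1).
rewrite -(count_predC (mem lam) (iota 1 _)) addnC.
congr (_ + _); rewrite count_mem_sym ?iota_uniq // -[LHS]count_predT.
apply: eq_in_count => x x_lam.
by rewrite mem_iota add1n ltnS (allP lam_pos) // (sorted_ltn_le_last lam_sorted x_lam).
Qed.

Lemma unrefinable_mirror lam a : ~~ refinable lam -> largest lam \in lam ->
  0 < a -> a.*2 < largest lam -> a \notin lam -> largest lam - a \in lam.
Proof.
move=> unref L_lam a_pos a_lt a_notin; apply: contraNT unref => La_notin.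
apply/hasP; exists a; first by rewrite mem_filter a_notin mem_iota; lia.
apply/hasP; exists (largest lam - a); first by rewrite mem_filter La_notin mem_iota; lia.
by rewrite subnKC ?L_lam ?andbT; lia.
Qed.

Lemma not_refinable_of_missing_ge lam : sorted ltn lam ->
  {in missing lam, forall m, largest lam <= m.*2} -> ~~ refinable lam.
Proof.
move=> lam_sorted half_le; apply/hasPn => a a_miss; apply/hasPn => b b_miss.
apply/negP => /andP[a_ne_b /(sorted_ltn_le_last lam_sorted)].
by have := half_le a a_miss; have := half_le b b_miss; rewrite /largest; lia.
Qed.

Definition pair_part (lam : seq nat) (a : nat) : nat :=
  if a \in lam then a else largest lam - a.

Lemma perm_pair_parts lam : sorted ltn lam -> all (fun x => 0 < x) lam -> lam != [::] ->
  ~~ refinable lam -> size (missing lam) = (largest lam)./2 ->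
  perm_eq lam (largest lam :: map (pair_part lam) (iota 1 (largest lam).-1./2)).
Proof.
rewrite /pair_part; set L := largest lam; set h := L.-1./2.
move=> lam_sorted lam_pos lam_nil unref size_miss.
have lam_uniq := sorted_uniq ltn_trans ltnn lam_sorted.
have L_lam : L \in lam := largest_mem lam_nil.
have L_pos : 0 < L := allP lam_pos L L_lam.
have size_lam : size lam = h.+1 by have := size_missing lam_sorted lam_pos; lia.
have pairs_uniq : uniq (L :: map (pair_part lam) (iota 1 h)).
  rewrite /= map_inj_in_uniq ?iota_uniq ?andbT; last first.
    by move=> a b; rewrite !mem_iota /pair_part; case: ifP; case: ifP; lia.
  by apply/mapP => -[a]; rewrite mem_iota /pair_part; case: ifP; lia.
have pairs_sub : {subset L :: map (pair_part lam) (iota 1 h) <= lam}.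
  move=> y; rewrite inE => /predU1P[-> // | /mapP[a]].
  rewrite mem_iota /pair_part => a_range ->; case: ifPn => // a_notin.
  by apply: unrefinable_mirror => //; lia.
have := uniq_min_size pairs_uniq pairs_sub; rewrite /= size_map size_iota size_lam.
by case=> // _ same_mem; rewrite perm_sym uniq_perm.
Qed.

Definition pair_excess (lam : seq nat) (h : nat) : nat :=
  \sum_(a <- iota 1 h) (a \notin lam) * (largest lam - a.*2).

Lemma sumn_pair_parts lam h : h.*2 < largest lam ->
  sumn (map (pair_part lam) (iota 1 h)) = sumn (iota 1 h) + pair_excess lam h.
Proof.
move=> h_lt; rewrite !sumnE big_map -big_split /=.
by apply: eq_big_seq => a; rewrite mem_iota /pair_part; case: (a \in lam) => /=; lia.
Qed.

Lemma pair_excess_even lam h : 2 %| largest lam -> 2 %| pair_excess lam h.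
Proof.
move=> L_even; apply: dvdn_sum => a _.
by rewrite dvdn_mull // dvdn_sub // -muln2 dvdn_mull.
Qed.

(* Every a < h contributes 0 or at least 3, and a = h contributes at most 1. *)
Lemma pair_excess_ne2 lam h : largest lam = h.*2.+1 -> pair_excess lam h != 2.
Proof.
rewrite /pair_excess; case: h => [|h] L_odd; first by rewrite big_nil.
rewrite -[h.+1]addn1 iotaD big_cat big_seq1 /=.
have : (\sum_(a <- iota 1 h) (a \notin lam) * (largest lam - a.*2) == 0) ||
       (3 <= \sum_(a <- iota 1 h) (a \notin lam) * (largest lam - a.*2)).
  rewrite big_seq; apply: (big_ind (fun n => (n == 0) || (3 <= n))) => // [x y|a].
    by lia.
  by rewrite mem_iota; case: (a \in lam) => /=; lia.
by case: (_ \notin lam) => /=; lia.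
Qed.

Lemma double_sumn_iota1 h : (sumn (iota 1 h)).*2 = h * h.+1.
Proof. by elim: h => // h IH; rewrite -[h.+1]addn1 iotaD sumn_cat /= doubleD IH; nia. Qed.

Lemma T_odd k : 0 < k -> T (2 * k - 1) = k * (2 * k - 1).
Proof.
move=> k_pos; rewrite /T.
have -> : (2 * k - 1) * (2 * k - 1).+1 = k * (2 * k - 1) * 2 by nia.
by rewrite mulnK.
Qed.

(* [S] stands for T_h and [E] for the pair excess: L >= 4k-3 overshoots T_n, while
   L = 4k-5 would need E = 2 and L = 4k-4 an odd E. *)
Lemma largest_from_sum k L h S E : 4 <= k -> 4 * k - 6 <= L -> h = L.-1./2 ->
  S.*2 = h * h.+1 -> k * (2 * k - 1) = L + (S + E) ->
  (2 %| L -> 2 %| E) -> (L = h.*2.+1 -> E != 2) -> L = 4 * k - 6.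
Proof.
move=> k_ge4; have [j ->] : exists j, k = j + 4 by exists (k - 4); lia.
have -> : (j + 4) * (2 * (j + 4) - 1) = 2 * j * j + 15 * j + 28 by nia.
move=> L_ge h_def S_def sum_eq E_even E_ne2.
have [L_big | L_small] := leqP (4 * j + 13) L.
  have : (2 * j + 6) * (2 * j + 7) <= h * h.+1 by apply: leq_mul; lia.
  nia.
have [L_eq | [L_eq | L_eq]] : L = 4 * j + 10 \/ L = 4 * j + 11 \/ L = 4 * j + 12 by lia.
- lia.
- have h_eq : h = 2 * j + 5 by lia.
  have E_eq : E = 2 by rewrite h_eq in S_def; nia.
  by move: (E_ne2 ltac:(lia)); rewrite E_eq.
- have h_eq : h = 2 * j + 5 by lia.
  have E_eq : E = 1 by rewrite h_eq in S_def; nia.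
  by move: (E_even ltac:(lia)); rewrite E_eq.
Qed.

Definition max_witness (k : nat) : seq nat :=
  iota 1 (2 * k - 4) ++ [:: 2 * k; 4 * k - 6].

Lemma largest_max_witness k : largest (max_witness k) = 4 * k - 6.
Proof. by rewrite /largest last_cat. Qed.

Lemma max_witness_unrefinable k : 4 <= k -> unrefinable (T (2 * k - 1)) (max_witness k).
Proof.
move=> k_ge4; have witness_sorted : sorted ltn (max_witness k).
  rewrite (sorted_pairwise ltn_trans) pairwise_cat -(sorted_pairwise ltn_trans).
  rewrite iota_ltn_sorted /=.
  rewrite andbT; apply/andP; split; last lia.
  by apply/allrelP => x y; rewrite mem_iota !inE; lia.
apply/andP; split; last first.
  apply: not_refinable_of_missing_ge => // m; rewrite largest_max_witness.
  by rewrite mem_filter mem_iota mem_cat mem_iota; lia.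
apply/and4P; split => //.
- by apply/allP => x; rewrite mem_cat mem_iota !inE; lia.
- rewrite sumn_cat /= T_odd; last lia.
  by apply/eqP; have := double_sumn_iota1 (2 * k - 4); nia.
by rewrite size_cat /= addn2.
Qed.

Lemma overlineU_T_odd_shape k lam : 4 <= k -> overlineU (T (2 * k - 1)) lam ->
  [/\ sorted ltn lam, size lam = 2 * k - 3 & 2 * k - 3 \notin lam].
Proof.
move=> k_ge4 [[/andP[/and4P[lam_sorted lam_pos /eqP sum_lam size_ge2] unref] max_L]].
move=> size_miss; have lam_nil : lam != [::] by apply: contraTneq size_ge2 => ->.
have perm_lam := perm_pair_parts lam_sorted lam_pos lam_nil unref size_miss.
have L_pos : 0 < largest lam := allP lam_pos _ (largest_mem lam_nil).
have L_ge : 4 * k - 6 <= largest lam.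
  by rewrite -(largest_max_witness k); apply/max_L/max_witness_unrefinable.
have L_eq : largest lam = 4 * k - 6.
  apply: (largest_from_sum k_ge4 L_ge erefl (double_sumn_iota1 _) _
    (@pair_excess_even lam _) (@pair_excess_ne2 lam _)).
  rewrite -T_odd; last lia.
  by rewrite -sum_lam (perm_sumn perm_lam) /= sumn_pair_parts //; lia.
rewrite (perm_size perm_lam) (perm_mem perm_lam) /= size_map size_iota L_eq.
split=> //; first by lia.
rewrite inE negb_or; apply/andP; split; first by lia.
by apply/mapP => -[a]; rewrite mem_iota /pair_part L_eq; case: ifP; lia.
Qed.

Theorem lemma3p5 (k : nat) (lam : seq nat) (z : nat) :
  4 <= k ->
  overlineU (T (2 * k - 1)) lam ->
  S_enum lam z = (2 * k - 1) - 2 ->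
  [/\ ~~ KN_cell lam z.+1 z.+1,
      KN_col_count lam z.+1 = z &
      KN_diag_count lam = z].
Proof.
move=> k_ge4 overU S_z.
have [lam_sorted size_lam r_notin] := overlineU_T_odd_shape k_ge4 overU.
have gaps_r : gaps_below lam (2 * k - 3) = z.
  by apply: S_enum_gaps_below; rewrite ?S_z; lia.
have col := KN_cell_durfee_col lam_sorted r_notin size_lam.
have diag := KN_cell_durfee_diag lam_sorted r_notin size_lam.
rewrite gaps_r in col diag.
have z_le : z <= 2 * k - 3 by rewrite -gaps_r gaps_below_le.
have height := KN_height_size (sorted_uniq ltn_trans ltnn lam_sorted).
split.
- by rewrite col ltnn andbF.
- by rewrite /KN_col_count (eq_count col) height size_lam count_iota1_le.
by rewrite /KN_diag_count (eq_count diag) height size_lam count_iota1_le.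
Qed.
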